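(* Let $X$ be a non-empty set and let $\mathcal{U}\subseteq P(X)$ be anti-closed under arbitrary unions. Then $\mathcal{U}$ is anti-closed under finite intersections.
   Context: For a family $\mathcal{U}\subseteq P(X)$: $\mathcal{U}$ is anti-closed under finite intersections if for every $n\in\mathbb{N}$ and all $A_1,\dots,A_n\in\mathcal{U}$ that are not all equal, $\bigcap_{i=1}^n A_i\notin\mathcal{U}$; $\mathcal{U}$ is anti-closed under arbitrary intersections if for every non-empty index set $J$ and all $A_i\in\mathcal{U}$ ($i\in J$) not all equal, $\bigcap_{i\in J}A_i\notin\mathcal{U}$; $\mathcal{U}$ is anti-closed under arbitrary unions if for every non-empty index set $J$ and all $A_i\in\mathcal{U}$ ($i\in J$) not all equal, $\bigcup_{i\in J}A_i\notin\mathcal{U}$. *)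

From mathcomp Require Import all_boot.
From mathcomp Require Import boolp classical_sets.
Set Implicit Arguments. Unset Strict Implicit. Unset Printing Implicit Defensive.
Local Open Scope classical_set_scope.

Definition anti_closed_finite_inter (X : Type) (U : set (set X)) : Prop :=
  forall (n : nat) (A : 'I_n -> set X),
    (forall i, U (A i)) ->
    (exists i j, A i <> A j) ->
    ~ U (\bigcap_(i in [set: 'I_n]) A i).

Definition anti_closed_arbitrary_unions (X : Type) (U : set (set X)) : Prop :=
  forall (J : Type) (A : J -> set X),
    inhabited J ->
    (forall i, U (A i)) ->
    (exists i j, A i <> A j) ->
    ~ U (\bigcup_(i in [set: J]) A i).

From mathcomp Require Import all_boot.
From mathcomp Require Import boolp classical_sets.
Local Open Scope classical_set_scope.
Set Implicit Arguments. Unset Strict Implicit. Unset Printing Implicit Defensive.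

(* The intersection [B] of a family in [U] that is not constant differs from
   some member [C] while lying below it; then [B ∪ C = C] is in [U], which the
   two-member family [{B, C}] forbids. *)

Lemma anti_closed_unions_no_strict_subset (X : Type) (U : set (set X))
    (B C : set X) :
  anti_closed_arbitrary_unions U ->
  U B -> U C -> B `<=` C -> B <> C -> False.
Proof.
move=> anti_U UB UC BC neqBC.
have union_BC : \bigcup_(b in [set: bool]) (if b then B else C) = C.
  apply/seteqP; split => [x [[]] _ //= /BC //|x Cx].
  by exists false.
have := @anti_U bool (fun b => if b then B else C) (inhabits true).
rewrite union_BC; apply=> //.
- by case.
- by exists true, false.
Qed.

Lemma bigcap_nonconstant_neq (X I : Type) (A : I -> set X) :
  (exists i j, A i <> A j) ->
  exists k, \bigcap_(i in [set: I]) A i <> A k.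
Proof.
move=> [i [j neq_ij]].
have [eq_i|] := pselect (\bigcap_(k in [set: I]) A k = A i); last by exists i.
by exists j => eq_j; apply: neq_ij; rewrite -eq_i -eq_j.
Qed.

Theorem mainTheorem5 (X : Type) (hX : inhabited X) (U : set (set X)) :
  anti_closed_arbitrary_unions U -> anti_closed_finite_inter U.
Proof.
move=> anti_U n A UA nonconst UB.
have [k neq_k] := bigcap_nonconstant_neq nonconst.
apply: (anti_closed_unions_no_strict_subset anti_U UB (UA k) _ neq_k).
exact: bigcap_inf.
Qed.
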